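(* Let $\tau\in\mathbb{C}$ with $\operatorname{Im}(\tau)>0$ and $|\tau|=1$, and let $\Gamma=\{m+n\tau:m,n\in\mathbb{Z}\}$. Let $I$ be an antiholomorphic involution of $\mathbb{C}/\Gamma$ induced by $z\mapsto a\bar z+b$ with $a,b\in\mathbb{C}$ and $a\notin\{1,-1\}$. Then $I$ has a fixpoint.
   Context: An antiholomorphic involution is an antiholomorphic map $I$ with $I\circ I=\mathrm{id}$. *)

From mathcomp Require Import all_boot all_order all_algebra.
From mathcomp Require Import reals complex.
Set Implicit Arguments. Unset Strict Implicit. Unset Printing Implicit Defensive.
Import Order.TTheory GRing.Theory Num.Theory.
Local Open Scope ring_scope.

Definition in_lattice (R : realType) (tau w : R[i]) : Prop :=
  exists m n : int, w = m%:~R + n%:~R * tau.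

(* f : C -> C induces a well-defined map on C / Gamma *)
Definition descends (R : realType) (tau : R[i]) (f : R[i] -> R[i]) : Prop :=
  forall z w, in_lattice tau (z - w) -> in_lattice tau (f z - f w).

Definition induced_involution (R : realType) (tau : R[i]) (f : R[i] -> R[i]) : Prop :=
  forall z, in_lattice tau (f (f z) - z).

Definition induced_has_fixpoint (R : realType) (tau : R[i]) (f : R[i] -> R[i]) : Prop :=
  exists z, in_lattice tau (f z - z).

From mathcomp Require Import all_boot all_order all_algebra.
From mathcomp Require Import reals complex.
From mathcomp Require Import zify ring.
Set Implicit Arguments. Unset Strict Implicit. Unset Printing Implicit Defensive.
Import Order.TTheory GRing.Theory Num.Theory.
Local Open Scope ring_scope.

(* Let [sigma g := a g^*]. Since [I] is an involution, [a a^* = 1] and [c := a b^* + b]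
   lies in [Gamma] with [sigma c = c]; [z := (b - g) / 2] is then fixed by [I] modulo
   [Gamma] as soon as [g \in Gamma] satisfies [g + sigma g = c]. Writing [a = x + w tau],
   [|tau| = 1] and [sigma tau \in Gamma] make [k := 2 x Re tau] an integer with
   [x^2 + k w + w^2 = 1], and [Im tau > 0] gives [k^2 < 4 x^2] unless [x = k = 0].
   For [a <> 1, -1] this forces [w^2 = 1], and [g := w n] works for [c = m + n tau]. *)

Lemma no_square_between (x k : int) :
  0 <= k -> k * k < x * x -> x * x < (k + 1) * (k + 1) -> False.
Proof.
move=> k_ge0 lt_kx lt_xk1.
have [x_ge0|x_lt0] := lerP 0 x.
  have : k < x by nia.
  nia.
have : k < - x by nia.
nia.
Qed.

Lemma sqr_eq_sqr_add1 (x w : int) : x * x = w * w + 1 -> w = 0.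
Proof.
move=> e; have [w_ge0|w_lt0] := lerP 0 w.
  have [//|w_neq0] := eqVneq w 0.
  by exfalso; apply: (@no_square_between x w); nia.
by exfalso; apply: (@no_square_between x (- w)); nia.
Qed.

Lemma sqr_eq_sqr_add3 (y k : int) : y * y = k * k + 3 -> k * k = 1.
Proof.
move=> e; have [k_ge0|k_lt0] := lerP 0 k.
  have [k_le1|k_gt1] := lerP k 1.
    have [k0|k_neq0] := eqVneq k 0; last nia.
    by exfalso; apply: (@no_square_between y 1); nia.
  by exfalso; apply: (@no_square_between y k); nia.
have [k_geN1|k_ltN1] := lerP (-1) k; first nia.
by exfalso; apply: (@no_square_between y (- k)); nia.
Qed.

(* [4 = (2 w + k)^2 + (4 x^2 - k^2)] with a positive second summand. *)
Lemma norm_form_eq1_coord (x k w : int) :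
  x * x + k * w + w * w = 1 -> k * k < 4 * (x * x) \/ x = 0 /\ k = 0 ->
  w = 0 \/ w * w = 1.
Proof.
move=> e [lt_kx|[x0 k0]]; last by right; rewrite x0 k0 in e; lia.
have lt4 : (2 * w + k) * (2 * w + k) < 4 by nia.
have bounds : -1 <= 2 * w + k <= 1 by nia.
have [e0|e1] : 2 * w + k = 0 \/ (2 * w + k) * (2 * w + k) = 1 by move: bounds; nia.
  by left; apply: (@sqr_eq_sqr_add1 x); nia.
have k1 : k * k = 1 by apply: (@sqr_eq_sqr_add3 (2 * x)); nia.
nia.
Qed.

Section RealCoordinates.
Variables (C : numClosedFieldType) (tau : C).

Lemma Im_real_coords (p q : C) : p \is Num.real -> q \is Num.real ->
  'Im (p + q * tau) = q * 'Im tau.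
Proof.
by move=> p_real q_real; rewrite raddfD /= (ImMl q_real) (Creal_ImP _ p_real) add0r.
Qed.

Lemma real_coords_inj (p q p' q' : C) : 'Im tau != 0 ->
  p \is Num.real -> q \is Num.real -> p' \is Num.real -> q' \is Num.real ->
  p + q * tau = p' + q' * tau -> p = p' /\ q = q'.
Proof.
move=> Im_neq0 p_real q_real p'_real q'_real e.
have qq' : q = q'.
  apply: (mulIf Im_neq0).
  by rewrite -(Im_real_coords p_real q_real) -(Im_real_coords p'_real q'_real) e.
by split=> //; move: e; rewrite qq' => /addIr.
Qed.

Lemma conjC_twiceRe : tau^* = 2 * 'Re tau - tau.
Proof. by rewrite ReE mulrC divfK ?pnatr_eq0 // addrAC subrr add0r. Qed.

Hypothesis tau_norm1 : `|tau| = 1.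

Lemma mul_conjC_tau : tau * tau^* = 1.
Proof. by rewrite -normCK tau_norm1 expr1n. Qed.

Lemma mul_conj_real_coords (x w m n : C) : m \is Num.real -> n \is Num.real ->
  (x + w * tau) * (m + n * tau)^* =
    (x * m + w * n + n * (x * (2 * 'Re tau))) + (w * m - x * n) * tau.
Proof.
move=> m_real n_real.
rewrite rmorphD rmorphM /= (conj_Creal m_real) (conj_Creal n_real) conjC_twiceRe.
have -> : (x + w * tau) * (m + n * (2 * 'Re tau - tau)) =
    x * m + w * n * (tau * (2 * 'Re tau - tau)) + n * (x * (2 * 'Re tau))
    + (w * m - x * n) * tau by ring.
by rewrite -conjC_twiceRe mul_conjC_tau mulr1.
Qed.

Lemma Re_sqr_lt1 : 0 < 'Im tau -> 'Re tau ^+ 2 < 1.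
Proof.
move=> Im_gt0; rewrite -(expr1n _ 2) -tau_norm1 normC2_Re_Im ltrDl.
by rewrite exprn_gt0.
Qed.

Lemma twiceRe_coord_bound (x k : int) : 0 < 'Im tau ->
  x%:~R * (2 * 'Re tau) = k%:~R -> k * k < 4 * (x * x) \/ x = 0 /\ k = 0.
Proof.
move=> Im_gt0 xk; have [x0|x_neq0] := eqVneq x 0.
  by right; split=> //; apply/eqP; rewrite -(eqr_int C) -xk x0 mul0r.
left; rewrite -(ltr_int C) !rmorphM /= -xk.
have -> : x%:~R * (2 * 'Re tau) * (x%:~R * (2 * 'Re tau)) =
  4 * (x%:~R * x%:~R) * 'Re tau ^+ 2 :> C by ring.
rewrite gtr_pMr ?Re_sqr_lt1 // mulr_gt0 // -rmorphM ltr0z; nia.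
Qed.

End RealCoordinates.

Section Lattice.
Variables (R : realType) (tau : R[i]).

Lemma in_latticeB (v w : R[i]) :
  in_lattice tau v -> in_lattice tau w -> in_lattice tau (v - w).
Proof.
move=> [m1 [n1 ->]] [m2 [n2 ->]]; exists (m1 - m2), (n1 - n2).
by rewrite !rmorphB /=; ring.
Qed.

Hypothesis Im_tau_neq0 : 'Im tau != 0.

Lemma int_coords_inj (m n m' n' : int) :
  m%:~R + n%:~R * tau = m'%:~R + n'%:~R * tau -> m = m' /\ n = n'.
Proof.
move=> /(real_coords_inj Im_tau_neq0 (realz _ m) (realz _ n) (realz _ m') (realz _ n')).
by case=> /intr_inj -> /intr_inj ->.
Qed.

Lemma in_lattice_real_coords (p q : R[i]) : p \is Num.real -> q \is Num.real ->
  in_lattice tau (p + q * tau) -> exists m n : int, p = m%:~R /\ q = n%:~R.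
Proof.
move=> p_real q_real [m [n e]]; exists m, n.
exact: real_coords_inj Im_tau_neq0 p_real q_real (realz _ m) (realz _ n) e.
Qed.

Lemma half_notin_lattice : ~ in_lattice tau 2^-1.
Proof.
move=> [m [n half_mn]].
have /int_coords_inj [] : 1%:~R + 0%:~R * tau = (2 * m)%:~R + (2 * n)%:~R * tau.
  by rewrite !intrM -mulrA -mulrDr -half_mn mul0r addr0 mulfV ?pnatr_eq0.
lia.
Qed.

End Lattice.

Section ReflectionMap.
Variables (R : realType) (tau a b : R[i]).
Local Notation f := (fun z => a * z^* + b).

Lemma descends_lattice :
  descends tau f -> in_lattice tau a /\ in_lattice tau (a * tau^*).
Proof.
move=> desc; split.
  have := desc 1 0; rewrite conjC1 conjC0 mulr1 mulr0 add0r addrK; apply.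
  by exists 1, 0; rewrite subr0 mul0r addr0.
have := desc tau 0; rewrite conjC0 mulr0 add0r addrK; apply.
by exists 0, 1; rewrite subr0 mul1r add0r.
Qed.

Lemma involution_shift_in_lattice :
  induced_involution tau f -> in_lattice tau (a * b^* + b).
Proof. by move=> /(_ 0); rewrite conjC0 mulr0 add0r subr0. Qed.

(* If [k := a a^* - 1] were nonzero, [f (f z) - z = k z + f (f 0)] would put [k^-1 / 2] in the lattice. *)
Lemma involution_mul_conj : 'Im tau != 0 -> induced_involution tau f -> a * a^* = 1.
Proof.
move=> Im_neq0 inv; apply/eqP; rewrite -subr_eq0; apply/negPn/negP => k_neq0.
apply: (half_notin_lattice Im_neq0).
have := in_latticeB (inv ((a * a^* - 1)^-1 / 2)) (involution_shift_in_lattice inv).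
rewrite rmorphD rmorphM /= conjCK.
have -> : a * (a^* * ((a * a^* - 1)^-1 / 2) + b^*) + b - (a * a^* - 1)^-1 / 2
    - (a * b^* + b) = (a * a^* - 1) * (a * a^* - 1)^-1 / 2 by ring.
by rewrite mulfV // mul1r.
Qed.

Lemma mul_conj_shift_fixed : a * a^* = 1 -> a * (a * b^* + b)^* = a * b^* + b.
Proof.
by move=> a_unit; rewrite rmorphD rmorphM /= conjCK mulrDr mulrA a_unit mul1r addrC.
Qed.

Lemma fixpoint_of_trace (g : R[i]) :
  in_lattice tau g -> g + a * g^* = a * b^* + b -> induced_has_fixpoint tau f.
Proof.
move=> g_in trace_g; exists ((b - g) / 2).
suff -> : a * ((b - g) / 2)^* + b - (b - g) / 2 = g by [].
rewrite fmorph_div rmorphB /= rmorph_nat.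
have -> : a * ((b^* - g^*) / 2%:R) + b - (b - g) / 2 =
  (a * b^* + b - a * g^* + g) / 2 by field.
by rewrite -trace_g; field.
Qed.

End ReflectionMap.

Section IntegralReflection.
Variables (R : realType) (tau : R[i]) (x w : int).
Hypotheses (Im_tau_gt0 : 0 < 'Im tau) (tau_norm1 : `|tau| = 1).
Local Notation a := (x%:~R + w%:~R * tau).

Let Im_tau_neq0 : 'Im tau != 0. Proof. by rewrite gt_eqF. Qed.

Lemma twiceRe_coord_int :
  in_lattice tau (a * tau^*) -> exists k : int, x%:~R * (2 * 'Re tau) = k%:~R.
Proof.
have -> : a * tau^* = (w%:~R + x%:~R * (2 * 'Re tau)) + (- x%:~R) * tau.
  by rewrite mulrDl -mulrA mul_conjC_tau // {1}conjC_twiceRe; ring.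
case/in_lattice_real_coords => //; first by rewrite realD ?realM ?realz ?Creal_Re.
  by rewrite realN realz.
move=> p [_ [xp _]]; exists (p - w); rewrite rmorphB /= -xp; ring.
Qed.

Lemma norm_form_of_mul_conj (k : int) : x%:~R * (2 * 'Re tau) = k%:~R ->
  a * a^* = 1 -> x * x + k * w + w * w = 1.
Proof.
move=> xk; rewrite mul_conj_real_coords ?realz // xk -!intrM -intrB -2!intrD => e.
have /(int_coords_inj Im_tau_neq0) [norm _] :
    (x * x + w * w + w * k)%:~R + (w * x - x * w)%:~R * tau = 1%:~R + 0%:~R * tau.
  by rewrite e mul0r addr0.
lia.
Qed.

Lemma fixed_lattice_coords (k m n : int) : x%:~R * (2 * 'Re tau) = k%:~R ->
  a * (m%:~R + n%:~R * tau)^* = m%:~R + n%:~R * tau -> (x + 1) * n = w * m.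
Proof.
move=> xk; rewrite mul_conj_real_coords ?realz // xk -!intrM -intrB -2!intrD.
by case/int_coords_inj => // _; lia.
Qed.

Lemma trace_of_fixed_coords (m n : int) : w * w = 1 -> (x + 1) * n = w * m ->
  (w * n)%:~R + a * ((w * n)%:~R)^* = m%:~R + n%:~R * tau.
Proof.
move=> w_unit fixed; rewrite conj_Creal ?realz //.
have -> : m = (x + 1) * (w * n) by rewrite mulrA mulrAC fixed mulrAC w_unit mul1r.
have -> : n%:~R = (w * (w * n))%:~R :> R[i] by rewrite mulrA w_unit mul1r.
by rewrite !intrM intrD; ring.
Qed.

End IntegralReflection.

Lemma lattice_fixed_point_trace (R : realType) (tau a c : R[i]) :
  0 < 'Im tau -> `|tau| = 1 ->
  in_lattice tau a -> in_lattice tau (a * tau^*) -> a * a^* = 1 -> a != 1 -> a != -1 ->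
  in_lattice tau c -> a * c^* = c -> exists2 g, in_lattice tau g & g + a * g^* = c.
Proof.
move=> Im_gt0 tau_norm1 [x [w ->]] a_conj_tau a_unit a_neq1 a_neqN1 [m [n ->]] c_fixed.
have [k xk] := twiceRe_coord_int Im_gt0 tau_norm1 a_conj_tau.
have norm_form := norm_form_of_mul_conj Im_gt0 tau_norm1 xk a_unit.
have w_unit : w * w = 1.
  have [w0|//] := norm_form_eq1_coord norm_form (twiceRe_coord_bound tau_norm1 Im_gt0 xk).
  have : x = 1 \/ x = -1 by move: norm_form; rewrite w0; nia.
  by case=> x1; [move: a_neq1 | move: a_neqN1]; rewrite w0 x1 mul0r addr0 ?rmorphN eqxx.
exists (w * n)%:~R; first by exists (w * n), 0; rewrite mul0r addr0.
exact: trace_of_fixed_coords w_unit (fixed_lattice_coords Im_gt0 tau_norm1 xk c_fixed).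
Qed.

Theorem lemma2p7 (R : realType) (tau a b : R[i]) :
  0 < 'Im tau -> `|tau| = 1 ->
  descends tau (fun z => a * z^* + b) ->
  induced_involution tau (fun z => a * z^* + b) ->
  a != 1 -> a != -1 ->
  induced_has_fixpoint tau (fun z => a * z^* + b).
Proof.
move=> Im_gt0 tau_norm1 desc inv a_neq1 a_neqN1.
have [a_in a_conj_tau] := descends_lattice desc.
have a_unit := involution_mul_conj (lt0r_neq0 Im_gt0) inv.
have [g g_in trace_g] := lattice_fixed_point_trace Im_gt0 tau_norm1 a_in a_conj_tau
  a_unit a_neq1 a_neqN1 (involution_shift_in_lattice inv) (mul_conj_shift_fixed b a_unit).
exact: fixpoint_of_trace g_in trace_g.
Qed.
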